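(* Let $\mu>\lambda$ and let $c=(c_1,c_2)$ be a positive unit vector ($\langle c\cdot c\rangle=1$). Then there is $\eta\in\mathbb C$ with $PCT\,f_{c\,\nu,\mathbf p}=\eta\,f_{c\,\nu,\mathbf p}$ for all $\mathbf p$ if and only if there exist $\theta_1,\theta_2\in\mathbb R$ such that $$c_1=\frac{e^{\frac12\pi\nu+i\theta_1}}{\sqrt{2\sinh\pi\nu}},\qquad c_2=\frac{e^{-\frac12\pi\nu+i\theta_2}}{\sqrt{2\sinh\pi\nu}},$$ and in that case $\eta=e^{-i(\theta_1+\theta_2+\frac32\pi)}$.
   Context: Fix $\omega>0$; work in the conformal chart $(t,\mathbf x)$, $t<0$, $\mathbf x\in\mathbb R^3$, of de Sitter spacetime. Let $\mu=m/\omega$ ($m$ the mass), $\lambda>0$ the coupling constant, $\mu>\lambda$, $\nu=\sqrt{\mu^2-\lambda^2}>0$. $J_a$ denotes the Bessel function of the first kind. For $\mathbf p\in\mathbb R^3$, $p=|\mathbf p|$, let $u_{\nu,\mathbf p}(t,\mathbf x)=\sqrt{\pi/\omega}\,(2\sinh\pi\nu)^{-1/2}(2\pi)^{-3/2}(-\omega t)^{3/2}J_{i\nu}(-pt)\,e^{i\mathbf x\cdot\mathbf p}$. On $\mathbb C^2$ use $\langle c\cdot c'\rangle=c_1^*c_1'-c_2^*c_2'$. For $c=(c_1,c_2)$ set $f_{c\,\nu,\mathbf p}=c_1u_{\nu,\mathbf p}+c_2u^*_{\nu,-\mathbf p}$. Operators: $(Pf)(t,\mathbf x)=f(t,-\mathbf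 x)$; $Cf=f^*$ (antilinear); $T$ replaces $t$ by $-t$ in the explicit formulas, where the multivalued factors are continued as $(-\omega(-t))^{3/2}=e^{\frac32 i\pi}(-\omega t)^{3/2}$ and $J_a(-s)=e^{i\pi a}J_a(s)$ for $s>0$ and any index $a$ (so $J_{\pm i\nu}(-s)=e^{\mp\pi\nu}J_{\pm i\nu}(s)$), term by term in linear combinations; $PCT=P\circ C\circ T$. *)

From Stdlib Require Import Arith Factorial Reals Lra ClassicalEpsilon.
Open Scope R_scope.

Definition Cx : Type := (R * R)%type.
Definition RC (r : R) : Cx := (r, 0).
Definition Ci : Cx := (0, 1).
Definition Cadd (z w : Cx) : Cx := (fst z + fst w, snd z + snd w).
Definition Cmul (z w : Cx) : Cx :=
  (fst z * fst w - snd z * snd w, fst z * snd w + snd z * fst w).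
Definition Copp (z : Cx) : Cx := (- fst z, - snd z).
Definition Cconj (z : Cx) : Cx := (fst z, - snd z).
Definition Cnorm2 (z : Cx) : R := fst z ^ 2 + snd z ^ 2.
Definition Cinv (z : Cx) : Cx := (fst z / Cnorm2 z, - snd z / Cnorm2 z).
Definition Cexp (z : Cx) : Cx := (exp (fst z) * cos (snd z), exp (fst z) * sin (snd z)).
Definition Cpowr (s : R) (z : Cx) : Cx := Cexp (Cmul z (RC (ln s))).

Fixpoint Csum (f : nat -> Cx) (n : nat) : Cx :=
  match n with O => f O | S k => Cadd (Csum f k) (f (S k)) end.
Fixpoint Cprod (f : nat -> Cx) (n : nat) : Cx :=
  match n with O => f O | S k => Cmul (Cprod f k) (f (S k)) end.

Definition Ccv (u : nat -> Cx) (l : Cx) : Prop :=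
  Un_cv (fun n => fst (u n)) (fst l) /\ Un_cv (fun n => snd (u n)) (snd l).
Definition Clim (u : nat -> Cx) : Cx := epsilon (inhabits (RC 0)) (fun l => Ccv u l).

(* Euler's limit formula: Gamma(z) = lim n! n^z / (z (z+1) ... (z+n)) *)
Definition Cgamma (z : Cx) : Cx :=
  Clim (fun n => Cmul (Cmul (RC (INR (fact n))) (Cpowr (INR n) z))
                      (Cinv (Cprod (fun k => Cadd z (RC (INR k))) n))).

Definition BesselJ (a : Cx) (s : R) : Cx :=
  Clim (fun n => Csum (fun k =>
     Cmul (RC ((-1) ^ k / INR (fact k)))
          (Cmul (Cinv (Cgamma (Cadd a (RC (INR k + 1)))))
                (Cpowr (s / 2) (Cadd a (RC (2 * INR k)))))) n).

Definition R3 : Type := (R * R * R)%type.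
Definition dot3 (x y : R3) : R :=
  fst (fst x) * fst (fst y) + snd (fst x) * snd (fst y) + snd x * snd y.
Definition norm3 (p : R3) : R := sqrt (dot3 p p).
Definition neg3 (p : R3) : R3 := ((- fst (fst p), - snd (fst p)), - snd p).

Definition mu (m omega : R) : R := m / omega.
Definition nu (m omega lambda : R) : R := sqrt (mu m omega ^ 2 - lambda ^ 2).

(* fields on the chart t < 0: functions of (t, x) *)
Definition field : Type := R -> R3 -> Cx.

Definition Knorm (omega v : R) : R :=
  sqrt (PI / omega) / sqrt (2 * sinh (PI * v)) * Rpower (2 * PI) (- (3 / 2)).

Definition mode (omega : R) (kappa : Cx) (a : Cx) (q : R3) : field :=
  fun t x => Cmul (Cmul (Cmul kappa (RC (Rpower (- omega * t) (3 / 2))))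
                        (BesselJ a (- norm3 q * t)))
                  (Cexp (Cmul Ci (RC (dot3 x q)))).

(* the same formula with t replaced by -t, multivalued factors continued as
   (-omega(-t))^{3/2} = e^{3 i pi/2} (-omega t)^{3/2},  J_a(-s) = e^{i pi a} J_a(s) *)
Definition modeT (omega : R) (kappa : Cx) (a : Cx) (q : R3) : field :=
  fun t x => Cmul (Cmul (Cexp (0, 3 / 2 * PI)) (Cexp (Cmul (RC PI) (Cmul Ci a))))
                  (mode omega kappa a q t x).

Definition u (omega v : R) (p : R3) : field := mode omega (RC (Knorm omega v)) (0, v) p.
Definition ustar_neg (omega v : R) (p : R3) : field :=
  fun t x => Cconj (u omega v (neg3 p) t x).

Definition fc (omega v : R) (c : Cx * Cx) (p : R3) : field :=
  fun t x => Cadd (Cmul (fst c) (u omega v p t x)) (Cmul (snd c) (ustar_neg omega v p t x)).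

(* T f_{c nu,p}: T applied term by term to the explicit formula
   f = c1 K (-wt)^{3/2} J_{i nu}(-pt) e^{ix.p} + c2 K (-wt)^{3/2} J_{-i nu}(-pt) e^{ix.p}
   (using J_{i nu}(s)^* = J_{-i nu}(s) for s > 0 to write u^*_{nu,-p} explicitly). *)
Definition T_fc (omega v : R) (c : Cx * Cx) (p : R3) : field :=
  fun t x => Cadd (Cmul (fst c) (modeT omega (RC (Knorm omega v)) (0, v) p t x))
                  (Cmul (snd c) (modeT omega (RC (Knorm omega v)) (0, - v) p t x)).

Definition Pop (g : field) : field := fun t x => g t (neg3 x).
Definition Cop (g : field) : field := fun t x => Cconj (g t x).

Definition PCT_fc (omega v : R) (c : Cx * Cx) (p : R3) : field :=
  Pop (Cop (T_fc omega v c p)).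

Definition cdot (c c' : Cx * Cx) : Cx :=
  Cadd (Cmul (Cconj (fst c)) (fst c')) (Copp (Cmul (Cconj (snd c)) (snd c'))).

(** With [K = Knorm (-omega t)^{3/2}], [e = e^{i x.p}] and [J = J_{i nu}(-|p| t)],
    the definitions give [f = K e (c1 J + c2 J_{-i nu})] and, after [T], [C] and [P],
    [PCT f = K e i (e^{-pi nu} conj c1 J_{-i nu} + e^{pi nu} conj c2 J)], using
    [J_{-i nu}(s) = conj J_{i nu}(s)].  Hence [PCT f - eta f = K e (alpha J + beta J_{-i nu})]
    for two explicit complex numbers [alpha, beta] depending on [c] and [eta], and the
    eigen-equation holds for all [p, t, x] iff [alpha = beta = 0], because [J_{i nu}] and
    [J_{-i nu}] are linearly independent on [(0, oo)].  That independence is the analytic core: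
    Euler's limit for [Gamma (1 + i nu)] converges to a nonzero number (a convergent infinite
    product), so [J_{i nu}(s) = (s/2)^{i nu} g(s)] with [g(s) -> 1/Gamma(1 + i nu) <> 0] as
    [s -> 0], while the phase [(s/2)^{i nu}] takes every unit value at arbitrarily small [s].
    Finally [alpha = beta = 0] together with [<c . c> = 1] is solved by elementary algebra:
    [|c1|^2 = e^{pi nu} / (2 sinh pi nu)], [|c2|^2 = e^{-pi nu} / (2 sinh pi nu)], and then
    [eta = e^{-i (th1 + th2 + 3 pi / 2)}]. *)

From Stdlib Require Import Factorial Reals Lra Lia Psatz ClassicalEpsilon.
From Coquelicot Require Complex.
Open Scope R_scope.

(** * Complex arithmetic *)

Lemma Ceq (z w : Cx) : fst z = fst w -> snd z = snd w -> z = w.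
Proof. destruct z, w; simpl; intros; subst; reflexivity. Qed.

Ltac ceq := apply Ceq; simpl.

Definition Csub (z w : Cx) : Cx := Cadd z (Copp w).
Definition Cdiv (z w : Cx) : Cx := Cmul z (Cinv w).

(** [Cx] is a field, so that [ring] and [field] can normalise complex expressions. *)
Lemma C_ring_theory : ring_theory (RC 0) (RC 1) Cadd Cmul Csub Copp (@eq Cx).
Proof. constructor; intros; unfold Csub; ceq; ring. Qed.

Lemma C_field_theory :
  field_theory (RC 0) (RC 1) Cadd Cmul Csub Copp Cdiv Cinv (@eq Cx).
Proof.
  constructor.
  - exact C_ring_theory.
  - intro H. injection H. lra.
  - reflexivity.
  - intros [a b] H.
    assert (N : a * a + b * b <> 0) by (intro E; apply H; ceq; nra).
    unfold Cinv, Cnorm2; ceq; field; lra.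
Qed.
Add Field C_field : C_field_theory.

Lemma Cadd_RC a b : Cadd (RC a) (RC b) = RC (a + b).
Proof. ceq; ring. Qed.

Lemma Cmul_RC a b : Cmul (RC a) (RC b) = RC (a * b).
Proof. ceq; ring. Qed.

(** The modulus; the same function as Coquelicot's [Cmod] on [R * R]. *)
Definition Cmod (z : Cx) : R := sqrt (Cnorm2 z).

Lemma Cmod_mul z w : Cmod (Cmul z w) = Cmod z * Cmod w.
Proof. exact (Complex.Cmod_mult z w). Qed.

Lemma Cmod_add z w : Cmod (Cadd z w) <= Cmod z + Cmod w.
Proof. exact (Complex.Cmod_triangle z w). Qed.

Lemma Cmod_RC r : Cmod (RC r) = Rabs r.
Proof. exact (Complex.Cmod_R r). Qed.

Lemma Cmod_inv z : z <> RC 0 -> Cmod (Cinv z) = / Cmod z.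
Proof. exact (Complex.Cmod_inv z). Qed.

Lemma Cmod_ge0 z : 0 <= Cmod z.
Proof. apply sqrt_pos. Qed.

Lemma Cmod_fst z : Rabs (fst z) <= Cmod z.
Proof. unfold Cmod, Cnorm2. rewrite <- sqrt_Rsqr_abs. apply sqrt_le_1_alt. unfold Rsqr. nra. Qed.

Lemma Cmod_snd z : Rabs (snd z) <= Cmod z.
Proof. unfold Cmod, Cnorm2. rewrite <- sqrt_Rsqr_abs. apply sqrt_le_1_alt. unfold Rsqr. nra. Qed.

Lemma Cmod_le_l1 z : Cmod z <= Rabs (fst z) + Rabs (snd z).
Proof.
  unfold Cmod, Cnorm2. apply Rsqr_incr_0_var.
  - rewrite Rsqr_sqrt by nra.
    replace (fst z ^ 2 + snd z ^ 2) with (Rsqr (Rabs (fst z)) + Rsqr (Rabs (snd z)))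
      by (rewrite <- !Rsqr_abs; unfold Rsqr; ring).
    unfold Rsqr. pose proof (Rabs_pos (fst z)); pose proof (Rabs_pos (snd z)). nra.
  - pose proof (Rabs_pos (fst z)); pose proof (Rabs_pos (snd z)); lra.
Qed.

Lemma Cmod_eq0 z : Cmod z = 0 -> z = RC 0.
Proof.
  intro H. assert (E : Cmod z * Cmod z = Cnorm2 z) by (apply sqrt_sqrt; unfold Cnorm2; nra).
  rewrite H in E. unfold Cnorm2 in E. ceq; nra.
Qed.

Lemma Cmod_pos z : z <> RC 0 -> 0 < Cmod z.
Proof. intro H. destruct (Cmod_ge0 z) as [|E]; auto. exfalso; apply H, Cmod_eq0; auto. Qed.

Lemma Cmod_conj z : Cmod (Cconj z) = Cmod z.
Proof. unfold Cmod, Cnorm2; simpl. f_equal. ring. Qed.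

Lemma Cmod_opp z : Cmod (Copp z) = Cmod z.
Proof. unfold Cmod, Cnorm2; simpl. f_equal. ring. Qed.

Lemma Cmod_sub_sym z w : Cmod (Csub z w) = Cmod (Csub w z).
Proof. replace (Csub z w) with (Copp (Csub w z)) by (unfold Csub; ceq; ring). apply Cmod_opp. Qed.

Lemma Cmod_sub_triangle z w y : Cmod (Csub z y) <= Cmod (Csub z w) + Cmod (Csub w y).
Proof.
  replace (Csub z y) with (Cadd (Csub z w) (Csub w y)) by (unfold Csub; ceq; ring).
  apply Cmod_add.
Qed.

Lemma Cnz_of_fst z : fst z <> 0 -> z <> RC 0.
Proof. intros H E; subst; simpl in H; lra. Qed.

Lemma Cmul_nz z w : z <> RC 0 -> w <> RC 0 -> Cmul z w <> RC 0.
Proof.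
  intros Hz Hw E. apply Cmod_pos in Hz; apply Cmod_pos in Hw.
  assert (H : Cmod (Cmul z w) = 0) by (rewrite E, Cmod_RC, Rabs_R0; auto).
  rewrite Cmod_mul in H. nra.
Qed.

Lemma Cmul_eq0_l z w : Cmul z w = RC 0 -> w <> RC 0 -> z = RC 0.
Proof.
  intros H Hw. replace z with (Cmul (Cmul z w) (Cinv w)) by (field; auto).
  rewrite H. ceq; ring.
Qed.

Lemma Cinv_nz z : z <> RC 0 -> Cinv z <> RC 0.
Proof.
  intros H E. assert (H1 : Cmul (Cinv z) z = RC 1) by (field; auto).
  rewrite E in H1. injection H1. lra.
Qed.

Lemma Cconj_mul z w : Cconj (Cmul z w) = Cmul (Cconj z) (Cconj w).
Proof. ceq; ring. Qed.

Lemma Cconj_add z w : Cconj (Cadd z w) = Cadd (Cconj z) (Cconj w).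
Proof. ceq; ring. Qed.

Lemma Cconj_RC r : Cconj (RC r) = RC r.
Proof. ceq; ring. Qed.

Lemma Cconj_inv z : Cconj (Cinv z) = Cinv (Cconj z).
Proof. unfold Cinv, Cnorm2; simpl. replace (- snd z * (- snd z * 1)) with (snd z * (snd z * 1)) by ring. ceq; unfold Rdiv; ring. Qed.

Lemma Cconj_involutive z : Cconj (Cconj z) = z.
Proof. ceq; ring. Qed.

Lemma Cexp_add z w : Cexp (Cadd z w) = Cmul (Cexp z) (Cexp w).
Proof. unfold Cexp; ceq; rewrite exp_plus, ?cos_plus, ?sin_plus; ring. Qed.

Lemma Cexp_conj z : Cconj (Cexp z) = Cexp (Cconj z).
Proof. unfold Cexp; ceq; rewrite ?cos_neg, ?sin_neg; ring. Qed.

Lemma Cexp_real r : Cexp (r, 0) = RC (exp r).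
Proof. unfold Cexp; ceq; rewrite ?cos_0, ?sin_0; ring. Qed.

Lemma Cexp_imag r : Cexp (0, r) = (cos r, sin r).
Proof. unfold Cexp; ceq; rewrite exp_0; ring. Qed.

Lemma Cmod_Cexp z : Cmod (Cexp z) = exp (fst z).
Proof.
  unfold Cmod, Cnorm2, Cexp; cbn [fst snd].
  replace ((exp (fst z) * cos (snd z)) ^ 2 + (exp (fst z) * sin (snd z)) ^ 2)
    with (exp (fst z) ^ 2)
    by (pose proof (sin2_cos2 (snd z)) as S; unfold Rsqr in S; nra).
  apply sqrt_pow2. left; apply exp_pos.
Qed.

Lemma Cexp_nz z : Cexp z <> RC 0.
Proof.
  intro E. pose proof (Cmod_Cexp z) as H. rewrite E, Cmod_RC, Rabs_R0 in H.
  pose proof (exp_pos (fst z)); lra.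
Qed.

Lemma polar_form z : exists th, z = (Cmod z * cos th, Cmod z * sin th).
Proof.
  unfold Cmod, Cnorm2. destruct z as [x y]; cbn [fst snd].
  set (r := sqrt (x ^ 2 + y ^ 2)).
  assert (Hr2 : r * r = x ^ 2 + y ^ 2) by (apply sqrt_sqrt; nra).
  assert (Hr_nn : 0 <= r) by apply sqrt_pos.
  clearbody r.
  destruct (Req_dec r 0) as [E|Hr0].
  { exists 0. subst r. ceq; nra. }
  assert (Hr : 0 < r) by lra.
  assert (Hx : -1 <= x / r <= 1).
  { split; apply Rmult_le_reg_r with r; auto;
      unfold Rdiv; rewrite Rmult_assoc, Rinv_l by lra; nra. }
  assert (Hs : sqrt (1 - (x / r)²) = Rabs (y / r)).
  { rewrite <- sqrt_Rsqr_abs. f_equal. unfold Rsqr.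
    replace 1 with ((x ^ 2 + y ^ 2) / (r * r)) at 1 by (rewrite <- Hr2; field; lra).
    field. lra. }
  destruct (Rle_dec 0 y).
  - exists (acos (x / r)).
    assert (0 <= y / r) by (apply Rmult_le_pos; [lra | left; apply Rinv_0_lt_compat; lra]).
    rewrite cos_acos, sin_acos, Hs, Rabs_pos_eq by auto.
    ceq; field; lra.
  - exists (- acos (x / r)).
    assert (y / r < 0).
    { apply Rmult_lt_reg_r with r; auto. unfold Rdiv. rewrite Rmult_assoc, Rinv_l by lra. lra. }
    rewrite cos_neg, sin_neg, cos_acos, sin_acos, Hs, Rabs_left by auto.
    ceq; field; lra.
Qed.

(** * Complex sequences *)

Lemma Clim_eq u l : Ccv u l -> Clim u = l.
Proof.
  intro H. unfold Clim.
  assert (E : exists l, Ccv u l) by eauto.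
  destruct (epsilon_spec (inhabits (RC 0)) (fun l => Ccv u l) E) as [H1 H2].
  destruct H as [H3 H4]. ceq; eapply UL_sequence; eauto.
Qed.

Lemma Ccv_of_Cmod u l :
  (forall eps, 0 < eps -> exists N, forall n, (n >= N)%nat -> Cmod (Csub (u n) l) < eps) ->
  Ccv u l.
Proof.
  intro H. split; intros eps Heps; destruct (H eps Heps) as [N HN]; exists N; intros n Hn;
    specialize (HN n Hn); unfold R_dist, Rminus in *.
  - pose proof (Cmod_fst (Csub (u n) l)). simpl in *. lra.
  - pose proof (Cmod_snd (Csub (u n) l)). simpl in *. lra.
Qed.

Lemma Cmod_of_Ccv u l : Ccv u l ->
  forall eps, 0 < eps -> exists N, forall n, (n >= N)%nat -> Cmod (Csub (u n) l) < eps.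
Proof.
  intros [H1 H2] eps Heps.
  destruct (H1 (eps / 2)) as [N1 HN1]; [lra|].
  destruct (H2 (eps / 2)) as [N2 HN2]; [lra|].
  exists (max N1 N2). intros n Hn.
  specialize (HN1 n ltac:(lia)). specialize (HN2 n ltac:(lia)). unfold R_dist, Rminus in *.
  pose proof (Cmod_le_l1 (Csub (u n) l)). simpl in *. lra.
Qed.

Lemma Ccv_eventually_ext u w l N :
  (forall n, (n >= N)%nat -> u n = w n) -> Ccv u l -> Ccv w l.
Proof.
  intros E H. apply Ccv_of_Cmod. intros eps Heps.
  destruct (Cmod_of_Ccv u l H eps Heps) as [M HM]. exists (max N M). intros n Hn.
  rewrite <- E by lia. apply HM. lia.
Qed.

Lemma Ccv_shift u l N : Ccv (fun n => u (n + N)%nat) l -> Ccv u l.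
Proof.
  intros H. apply Ccv_of_Cmod. intros eps Heps.
  destruct (Cmod_of_Ccv _ l H eps Heps) as [M HM]. exists (M + N)%nat. intros n Hn.
  replace n with ((n - N) + N)%nat by lia. apply HM. lia.
Qed.

Lemma Ccv_const z : Ccv (fun _ => z) z.
Proof.
  split; intros eps H; exists 0%nat; intros; unfold R_dist; rewrite Rminus_diag, Rabs_R0; auto.
Qed.

Lemma Ccv_mul u w l k : Ccv u l -> Ccv w k -> Ccv (fun n => Cmul (u n) (w n)) (Cmul l k).
Proof.
  intros [H1 H2] [H3 H4]. split; simpl.
  - apply CV_minus; apply CV_mult; auto.
  - apply CV_plus; apply CV_mult; auto.
Qed.

Lemma Ccv_conj u l : Ccv u l -> Ccv (fun n => Cconj (u n)) (Cconj l).
Proof. intros [H1 H2]; split; simpl; auto. apply CV_opp; auto. Qed.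

Definition Ccauchy (u : nat -> Cx) : Prop :=
  forall eps, 0 < eps -> exists N, forall n m, (n >= N)%nat -> (m >= N)%nat ->
    Cmod (Csub (u n) (u m)) < eps.

Lemma Ccauchy_cv u : Ccauchy u -> exists l, Ccv u l.
Proof.
  intro H.
  assert (C1 : Cauchy_crit (fun n => fst (u n))).
  { intros eps Heps. destruct (H eps Heps) as [N HN]. exists N. intros n m Hn Hm.
    specialize (HN n m Hn Hm). pose proof (Cmod_fst (Csub (u n) (u m))).
    simpl in *. unfold R_dist, Rminus in *. lra. }
  assert (C2 : Cauchy_crit (fun n => snd (u n))).
  { intros eps Heps. destruct (H eps Heps) as [N HN]. exists N. intros n m Hn Hm.
    specialize (HN n m Hn Hm). pose proof (Cmod_snd (Csub (u n) (u m))).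
    simpl in *. unfold R_dist, Rminus in *. lra. }
  destruct (R_complete _ C1) as [l1 H1], (R_complete _ C2) as [l2 H2].
  exists (l1, l2). split; auto.
Qed.

Lemma Ccauchy_ordered u :
  (forall eps, 0 < eps -> exists N, forall n m, (m >= N)%nat -> (n >= m)%nat ->
     Cmod (Csub (u n) (u m)) < eps) -> Ccauchy u.
Proof.
  intros H eps Heps. destruct (H eps Heps) as [N HN]. exists N. intros n m Hn Hm.
  destruct (Compare_dec.le_lt_dec m n).
  - apply HN; lia.
  - rewrite Cmod_sub_sym. apply HN; lia.
Qed.

Lemma Ccv_Cmod_lower u l c N :
  Ccv u l -> (forall n, (n >= N)%nat -> c <= Cmod (u n)) -> c <= Cmod l.
Proof.
  intros H Hc. apply Rnot_lt_le. intro Hlt.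
  destruct (Cmod_of_Ccv u l H (c - Cmod l)) as [M HM]; [lra|].
  specialize (HM (max N M) ltac:(lia)). specialize (Hc (max N M) ltac:(lia)).
  pose proof (Cmod_add (Csub (u (max N M)) l) l) as T.
  replace (Cadd (Csub (u (max N M)) l) l) with (u (max N M)) in T by (unfold Csub; ceq; ring).
  lra.
Qed.

Lemma Ccv_dist_upper u l a c N :
  Ccv u l -> (forall n, (n >= N)%nat -> Cmod (Csub (u n) a) <= c) -> Cmod (Csub l a) <= c.
Proof.
  intros H Hc. apply Rnot_lt_le. intro Hlt.
  destruct (Cmod_of_Ccv u l H (Cmod (Csub l a) - c)) as [M HM]; [lra|].
  specialize (HM (max N M) ltac:(lia)). specialize (Hc (max N M) ltac:(lia)).
  pose proof (Cmod_sub_triangle l (u (max N M)) a) as T.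
  rewrite (Cmod_sub_sym l (u (max N M))) in T. lra.
Qed.

Lemma eventually_small C x : 0 < x -> exists N, forall n, (n >= N)%nat -> C / (INR n + 1) < x.
Proof.
  intro Hx. destruct (INR_unbounded (C / x)) as [N HN]. exists N. intros n Hn.
  apply le_INR in Hn. pose proof (pos_INR N).
  apply Rmult_lt_reg_r with (INR n + 1); [lra|].
  replace (C / (INR n + 1) * (INR n + 1)) with C by (field; lra).
  assert (C = C / x * x) by (field; lra).
  apply Rmult_lt_compat_r with (r := x) in HN; auto. nra.
Qed.

Lemma Cmod_near_one z : 1 - Cmod (Csub z (RC 1)) <= Cmod z <= 1 + Cmod (Csub z (RC 1)).
Proof.
  pose proof (Cmod_sub_triangle z (RC 1) (RC 0)) as H1.
  pose proof (Cmod_sub_triangle (RC 1) z (RC 0)) as H2.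
  replace (Csub z (RC 0)) with z in H1, H2 by (unfold Csub; ceq; ring).
  replace (Csub (RC 1) (RC 0)) with (RC 1) in H1, H2 by (unfold Csub; ceq; ring).
  rewrite Cmod_RC, Rabs_R1 in H1, H2. rewrite (Cmod_sub_sym (RC 1)) in H2. lra.
Qed.

(** * Convergent infinite products
    If [W (k+1) = W k * rho k] with [|rho k - 1| <= C / ((k+1)(k+2))] and no [W k]
    vanishes, then [W] converges to a nonzero limit.  The bounds are phrased with the
    telescoping tail [C / (k+1) = sum_(j >= k) C / ((j+1)(j+2))]. *)
Section ConvergentProduct.
Variables (W rho : nat -> Cx) (C : R).
Hypothesis C_ge0 : 0 <= C.
Hypothesis W_succ : forall k, W (S k) = Cmul (W k) (rho k).
Hypothesis rho_close : forall k, Cmod (Csub (rho k) (RC 1)) <= C / ((INR k + 1) * (INR k + 2)).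
Hypothesis W_nz : forall k, W k <> RC 0.

Let tail k := C / (INR k + 1).

Lemma rho_close_tail k : Cmod (Csub (rho k) (RC 1)) <= tail k - tail (S k).
Proof.
  unfold tail. rewrite S_INR. replace (C / (INR k + 1) - C / (INR k + 1 + 1))
    with (C / ((INR k + 1) * (INR k + 2))) by (pose proof (pos_INR k); field; lra).
  apply rho_close.
Qed.

Lemma tail_antitone k n : (k <= n)%nat -> 0 <= tail n <= tail k.
Proof.
  intro Hkn. apply le_INR in Hkn. pose proof (pos_INR k). unfold tail, Rdiv. split.
  - apply Rmult_le_pos; auto. left; apply Rinv_0_lt_compat; lra.
  - apply Rmult_le_compat_l; auto. apply Rinv_le_contravar; lra.
Qed.

Lemma tail_0 : tail 0 = C.
Proof. unfold tail; simpl; field. Qed.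

Let B := Cmod (W 0%nat) * exp C.

Lemma W_growth k : Cmod (W k) <= Cmod (W 0%nat) * exp (tail 0 - tail k).
Proof.
  induction k as [|k IH].
  - rewrite Rminus_diag, exp_0. lra.
  - rewrite W_succ, Cmod_mul.
    replace (tail 0 - tail (S k)) with ((tail 0 - tail k) + (tail k - tail (S k))) by ring.
    rewrite exp_plus.
    pose proof (Cmod_near_one (rho k)). pose proof (rho_close_tail k).
    pose proof (exp_ineq1_le (tail k - tail (S k))). pose proof (Cmod_ge0 (W k)).
    apply Rle_trans with (Cmod (W k) * exp (tail k - tail (S k))).
    + apply Rmult_le_compat_l; lra.
    + rewrite <- Rmult_assoc. apply Rmult_le_compat_r; [left; apply exp_pos | lra].
Qed.

Lemma W_bounded k : Cmod (W k) <= B.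
Proof.
  eapply Rle_trans; [apply W_growth|]. unfold B. apply Rmult_le_compat_l; [apply Cmod_ge0|].
  rewrite tail_0. destruct (tail_antitone 0 k) as [H _]; [lia|].
  destruct H as [H|H]; [left; apply exp_increasing; lra | rewrite <- H, Rminus_0_r; lra].
Qed.

(** Increments are controlled by the tail: this makes [W] a Cauchy sequence. *)
Lemma W_increment m d : Cmod (Csub (W (d + m)%nat) (W m)) <= B * (tail m - tail (d + m)%nat).
Proof.
  induction d as [|d IH].
  - simpl. replace (Csub (W m) (W m)) with (RC 0) by (unfold Csub; ceq; ring).
    rewrite Cmod_RC, Rabs_R0. lra.
  - replace (S d + m)%nat with (S (d + m)) by lia.
    eapply Rle_trans; [apply (Cmod_sub_triangle _ (W (d + m)%nat))|].
    rewrite W_succ.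
    replace (Csub (Cmul (W (d + m)%nat) (rho (d + m)%nat)) (W (d + m)%nat))
      with (Cmul (W (d + m)%nat) (Csub (rho (d + m)%nat) (RC 1))) by (unfold Csub; ceq; ring).
    rewrite Cmod_mul.
    pose proof (rho_close_tail (d + m)). pose proof (W_bounded (d + m)).
    pose proof (Cmod_ge0 (W (d + m)%nat)). pose proof (Cmod_ge0 (Csub (rho (d + m)%nat) (RC 1))).
    assert (Cmod (W (d + m)%nat) * Cmod (Csub (rho (d + m)%nat) (RC 1))
            <= B * (tail (d + m)%nat - tail (S (d + m)))) by (apply Rmult_le_compat; lra).
    lra.
Qed.

Lemma W_lower k0 d : tail k0 <= 1 / 2 ->
  Cmod (W k0) * (1 - (tail k0 - tail (d + k0)%nat)) <= Cmod (W (d + k0)%nat).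
Proof.
  intro Hk0. induction d as [|d IH].
  - simpl. lra.
  - replace (S d + k0)%nat with (S (d + k0)) by lia. rewrite W_succ, Cmod_mul.
    pose proof (Cmod_near_one (rho (d + k0)%nat)). pose proof (rho_close_tail (d + k0)).
    destruct (tail_antitone k0 (d + k0)) as [Ht0 Ht1]; [lia|].
    destruct (tail_antitone (d + k0) (S (d + k0))) as [Ht2 Ht3]; [lia|].
    pose proof (Cmod_ge0 (W k0)).
    assert (Hstep : Cmod (W k0) * (1 - (tail k0 - tail (S (d + k0))))
       <= Cmod (W k0) * (1 - (tail k0 - tail (d + k0)%nat)) * (1 - (tail (d + k0)%nat - tail (S (d + k0)))))
      by (assert (0 <= Cmod (W k0) * ((tail k0 - tail (d + k0)%nat) * (tail (d + k0)%nat - tail (S (d + k0)))))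
            by (apply Rmult_le_pos; [|apply Rmult_le_pos]; lra); nra).
    eapply Rle_trans; [exact Hstep|].
    apply Rle_trans with (Cmod (W (d + k0)%nat) * (1 - (tail (d + k0)%nat - tail (S (d + k0))))).
    + apply Rmult_le_compat_r; lra.
    + apply Rmult_le_compat_l; [apply Cmod_ge0 | lra].
Qed.

Lemma convergent_product : exists L, L <> RC 0 /\ Ccv W L.
Proof.
  assert (HB : 0 <= B) by (unfold B; pose proof (Cmod_ge0 (W 0%nat)); pose proof (exp_pos C); nra).
  destruct (Ccauchy_cv W) as [L HL].
  { apply Ccauchy_ordered. intros eps Heps.
    destruct (eventually_small (B * C) eps Heps) as [N HN]. exists N. intros n m Hm Hnm.
    replace n with ((n - m) + m)%nat by lia.
    eapply Rle_lt_trans; [apply W_increment|].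
    eapply Rle_lt_trans; [|apply (HN m Hm)].
    destruct (tail_antitone m (n - m + m)) as [H _]; [lia|].
    replace (B * C / (INR m + 1)) with (B * tail m) by (unfold tail, Rdiv; ring).
    apply Rmult_le_compat_l; lra. }
  exists L. split; auto.
  destruct (eventually_small C (1 / 2)) as [k0 Hk0]; [lra|].
  specialize (Hk0 k0 (le_n _)). fold (tail k0) in Hk0.
  assert (Hlow : forall n, (n >= k0)%nat -> Cmod (W k0) / 2 <= Cmod (W n)).
  { intros n Hn. replace n with ((n - k0) + k0)%nat by lia.
    eapply Rle_trans; [|apply W_lower; lra].
    destruct (tail_antitone k0 (n - k0 + k0)) as [H _]; [lia|].
    pose proof (Cmod_ge0 (W k0)). nra. }
  pose proof (Ccv_Cmod_lower W L _ k0 HL Hlow).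
  pose proof (Cmod_pos _ (W_nz k0)).
  intro E. rewrite E, Cmod_RC, Rabs_R0 in H. lra.
Qed.
End ConvergentProduct.

(** * Euler's sequence for the Gamma function *)

Definition pochhammer (z : Cx) (n : nat) : Cx := Cprod (fun k => Cadd z (RC (INR k))) n.

Definition euler_seq (z : Cx) (n : nat) : Cx :=
  Cmul (Cmul (RC (INR (fact n))) (Cpowr (INR n) z)) (Cinv (pochhammer z n)).

Lemma Cgamma_euler_seq z : Cgamma z = Clim (euler_seq z).
Proof. reflexivity. Qed.

Lemma pochhammer_nz z n : 0 < fst z -> pochhammer z n <> RC 0.
Proof.
  intro H. induction n as [|n IH]; unfold pochhammer in *; cbn [Cprod].
  - apply Cnz_of_fst. simpl. lra.
  - apply Cmul_nz; auto. apply Cnz_of_fst. cbn [fst Cadd RC]. pose proof (pos_INR (S n)). lra.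
Qed.

Lemma euler_seq_nz z n : 0 < fst z -> euler_seq z n <> RC 0.
Proof.
  intro H. unfold euler_seq. apply Cmul_nz; [apply Cmul_nz | apply Cinv_nz, pochhammer_nz; auto].
  - apply Cnz_of_fst. simpl. apply not_0_INR, fact_neq_0.
  - apply Cexp_nz.
Qed.

Lemma Cpowr_conj s z : Cpowr s (Cconj z) = Cconj (Cpowr s z).
Proof. unfold Cpowr. rewrite Cexp_conj. f_equal. ceq; ring. Qed.

Lemma euler_seq_conj z n : euler_seq (Cconj z) n = Cconj (euler_seq z n).
Proof.
  unfold euler_seq. rewrite !Cconj_mul, Cconj_inv, Cconj_RC, Cpowr_conj. do 2 f_equal.
  unfold pochhammer. induction n as [|n IH]; cbn [Cprod].
  - rewrite Cconj_add, Cconj_RC; auto.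
  - rewrite Cconj_mul, IH, Cconj_add, Cconj_RC; auto.
Qed.

Definition euler_ratio (z : Cx) (n : nat) : Cx :=
  Cmul (RC (INR n + 1))
       (Cmul (Cexp (Cmul z (RC (ln (INR n + 1) - ln (INR n))))) (Cinv (Cadd z (RC (INR n + 1))))).

Lemma euler_seq_succ z n : 0 < fst z ->
  euler_seq z (S n) = Cmul (euler_seq z n) (euler_ratio z n).
Proof.
  intro Hz. unfold euler_seq, euler_ratio, pochhammer. cbn [Cprod].
  rewrite fact_simpl, mult_INR, S_INR. unfold Cpowr at 1.
  replace (Cmul z (RC (ln (INR n + 1))))
    with (Cadd (Cmul z (RC (ln (INR n)))) (Cmul z (RC (ln (INR n + 1) - ln (INR n)))))
    by (ceq; ring).
  rewrite Cexp_add. fold (Cpowr (INR n) z).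
  assert (Hp := pochhammer_nz z n Hz). unfold pochhammer in Hp.
  assert (Hq : Cadd z (RC (INR n + 1)) <> RC 0)
    by (apply Cnz_of_fst; cbn [fst Cadd RC]; pose proof (pos_INR n); lra).
  replace (RC ((INR n + 1) * INR (fact n))) with (Cmul (RC (INR n + 1)) (RC (INR (fact n))))
    by (ceq; ring).
  field. split; auto.
Qed.

(** The functional equation [Gamma (z + 1) = z Gamma z], at the level of the sequence. *)
Lemma pochhammer_shift z n :
  Cmul (pochhammer (Cadd z (RC 1)) n) z = Cmul (pochhammer z n) (Cadd z (RC (INR n + 1))).
Proof.
  unfold pochhammer. induction n as [|n IH]; cbn [Cprod].
  - simpl INR. ceq; ring.
  - rewrite S_INR.
    transitivity (Cmul (Cmul (Cprod (fun k => Cadd (Cadd z (RC 1)) (RC (INR k))) n) z)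
                       (Cadd (Cadd z (RC 1)) (RC (INR n + 1)))); [ceq; ring|].
    rewrite IH. ceq; ring.
Qed.

Lemma euler_seq_shift z n : (n >= 1)%nat -> 0 < fst z ->
  euler_seq (Cadd z (RC 1)) n
  = Cmul (Cmul z (euler_seq z n)) (Cmul (RC (INR n)) (Cinv (Cadd z (RC (INR n + 1))))).
Proof.
  intros Hn Hz. unfold euler_seq.
  assert (Hpow : Cpowr (INR n) (Cadd z (RC 1)) = Cmul (Cpowr (INR n) z) (RC (INR n))).
  { unfold Cpowr.
    replace (Cmul (Cadd z (RC 1)) (RC (ln (INR n))))
      with (Cadd (Cmul z (RC (ln (INR n)))) (ln (INR n), 0)) by (ceq; ring).
    rewrite Cexp_add, Cexp_real, exp_ln; auto. apply lt_0_INR; lia. }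
  rewrite Hpow.
  assert (Hp := pochhammer_nz z n Hz).
  assert (Hp' : pochhammer (Cadd z (RC 1)) n <> RC 0) by (apply pochhammer_nz; simpl; lra).
  assert (Hz0 : z <> RC 0) by (apply Cnz_of_fst; lra).
  assert (Hq : Cadd z (RC (INR n + 1)) <> RC 0)
    by (apply Cnz_of_fst; cbn [fst Cadd RC]; pose proof (pos_INR n); lra).
  assert (E : pochhammer (Cadd z (RC 1)) n
              = Cdiv (Cmul (pochhammer z n) (Cadd z (RC (INR n + 1)))) z)
    by (rewrite <- pochhammer_shift; unfold Cdiv; field; auto).
  rewrite E. unfold Cdiv. field. repeat split; auto.
Qed.

Lemma shift_factor_cv z : 0 <= fst z ->
  Ccv (fun n => Cmul (RC (INR n)) (Cinv (Cadd z (RC (INR n + 1))))) (RC 1).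
Proof.
  intro Hz. apply Ccv_of_Cmod. intros eps Heps.
  destruct (eventually_small (Cmod (Cadd z (RC 1))) eps Heps) as [N HN]. exists N. intros n Hn.
  assert (Hq : Cadd z (RC (INR n + 1)) <> RC 0)
    by (apply Cnz_of_fst; cbn [fst Cadd RC]; pose proof (pos_INR n); lra).
  replace (Csub (Cmul (RC (INR n)) (Cinv (Cadd z (RC (INR n + 1))))) (RC 1))
    with (Copp (Cmul (Cadd z (RC 1)) (Cinv (Cadd z (RC (INR n + 1))))))
    by (rewrite <- (Cadd_RC (INR n) 1) in *; field; auto).
  rewrite Cmod_opp, Cmod_mul, Cmod_inv by auto.
  eapply Rle_lt_trans; [|apply (HN n Hn)].
  assert (INR n + 1 <= Cmod (Cadd z (RC (INR n + 1)))).
  { pose proof (Cmod_fst (Cadd z (RC (INR n + 1)))) as H. simpl in H.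
    rewrite Rabs_pos_eq in H; pose proof (pos_INR n); lra. }
  pose proof (pos_INR n). pose proof (Cmod_ge0 (Cadd z (RC 1))).
  unfold Rdiv. apply Rmult_le_compat_l; auto. apply Rinv_le_contravar; lra.
Qed.

(** * Existence and non-vanishing of [Gamma (1 + i v)] *)

Lemma ln_succ_gap a : 1 <= a -> / (a + 1) <= ln (a + 1) - ln a <= / a.
Proof.
  intro Ha.
  assert (E : exp (ln (a + 1) - ln a) = (a + 1) / a)
    by (unfold Rminus; rewrite exp_plus, exp_Ropp, !exp_ln by lra; reflexivity).
  pose proof (exp_ineq1_le (ln (a + 1) - ln a)) as H1.
  pose proof (exp_ineq1_le (- (ln (a + 1) - ln a))) as H2.
  rewrite exp_Ropp, E in H2. rewrite E in H1.
  replace (/ (a + 1)) with (1 - / ((a + 1) / a)) by (field; lra).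
  replace (/ a) with ((a + 1) / a - 1) by (field; lra).
  lra.
Qed.

Lemma expi_second_order x : 0 <= x <= 1 -> Cmod (Csub (cos x, sin x) (1, x)) <= x ^ 2.
Proof.
  intro Hx. pose proof PI2_1.
  destruct (cos_bound x 0) as [Hc _]; try lra.
  destruct (sin_bound x 0) as [Hs _]; try lra.
  unfold cos_approx, sin_approx, cos_term, sin_term in *. simpl in Hc, Hs.
  assert (Hs' : sin x <= x)
    by (destruct (Req_dec x 0) as [->|]; [rewrite sin_0; lra | left; apply sin_lt_x; lra]).
  pose proof (COS_bound x).
  eapply Rle_trans; [apply Cmod_le_l1|]. simpl.
  rewrite Rabs_left1, Rabs_left1 by lra. nra.
Qed.

(** The real inequality behind [euler_ratio_close], with [w = 1/a] and [th = v h]. *)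
Lemma ratio_bound_arith a v w th :
  1 <= a -> 0 < v -> a * w = 1 -> 0 <= th <= v * w ->
  ((a + 2 + w) * th ^ 2 + (1 + 3 * v) * w) / (a + 2) <= (2 * v ^ 2 + 3 * v + 1) * w ^ 2.
Proof.
  intros Ha Hv Haw Hth.
  assert (Hw : 0 < w <= 1) by nra.
  apply Rmult_le_reg_r with (a + 2); [lra|].
  unfold Rdiv. rewrite Rmult_assoc, Rinv_l, Rmult_1_r by lra.
  assert (Hth2 : th ^ 2 <= v ^ 2 * w ^ 2) by nra.
  assert (H1 : (a + 2 + w) * th ^ 2 <= (a + 2 + w) * (v ^ 2 * w ^ 2)) by (apply Rmult_le_compat_l; lra).
  assert (H2 : (a + 2 + w) * w ^ 2 <= 2 * (a + 2) * w ^ 2) by nra.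
  assert (H3 : (a + 2) * w ^ 2 = w + 2 * w ^ 2) by nra.
  nra.
Qed.

(** For [z = 1 + i v], writing [a = n], [h = ln (a+1) - ln a] (so [e^h = (a+1)/a]) and
    [q = (a+1)^2/a = a + 2 + 1/a], the ratio minus one is [N / (a + 2 + i v)] with
    [N = q (e^{i v h} - 1 - i v h) + (1/a + i v (q h - 1))]. *)
Lemma euler_ratio_decomp a v h : 1 <= a -> exp h = (a + 1) / a ->
  Csub (Cmul (RC (a + 1)) (Cmul (Cexp (Cmul (1, v) (RC h))) (Cinv (Cadd (1, v) (RC (a + 1))))))
       (RC 1)
  = Cmul (Cadd (Cmul (RC (a + 2 + / a)) (Csub (cos (v * h), sin (v * h)) (1, v * h)))
               (/ a, v * ((a + 2 + / a) * h - 1)))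
         (Cinv (a + 2, v)).
Proof.
  intros Ha Hexp.
  assert (HD : ((a + 2, v) : Cx) <> RC 0) by (apply Cnz_of_fst; simpl; lra).
  replace (Cexp (Cmul (1, v) (RC h))) with (Cmul (RC ((a + 1) / a)) (cos (v * h), sin (v * h)))
    by (replace (Cmul (1, v) (RC h)) with ((h, v * h) : Cx) by (ceq; ring);
        unfold Cexp; ceq; rewrite Hexp; ring).
  replace (Cadd (1, v) (RC (a + 1))) with ((a + 2, v) : Cx) by (ceq; ring).
  replace (Cadd (Cmul (RC (a + 2 + / a)) (Csub (cos (v * h), sin (v * h)) (1, v * h)))
                (/ a, v * ((a + 2 + / a) * h - 1)))
    with (Csub (Cmul (RC ((a + 1) * ((a + 1) / a))) (cos (v * h), sin (v * h))) (a + 2, v))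
    by (unfold Csub; ceq; field; lra).
  rewrite <- Cmul_RC. field. exact HD.
Qed.

Lemma linear_coeff_bound a h : 1 <= a -> / (a + 1) <= h <= / a ->
  / a <= (a + 2 + / a) * h - 1 <= 3 * / a.
Proof.
  intros Ha Hh. pose proof (Rinv_0_lt_compat a ltac:(lra)).
  assert (/ a <= 1) by (rewrite <- Rinv_1; apply Rinv_le_contravar; lra).
  split.
  - apply Rle_trans with ((a + 2 + / a) * / (a + 1) - 1); [right; field; lra|].
    apply Rplus_le_compat_r, Rmult_le_compat_l; lra.
  - apply Rle_trans with ((a + 2 + / a) * / a - 1);
      [apply Rplus_le_compat_r, Rmult_le_compat_l; lra|].
    replace ((a + 2 + / a) * / a - 1) with (2 * / a + / a * / a) by (field; lra). nra.
Qed.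

Lemma ratio_numerator_bound a v h : 1 <= a -> 0 < v -> v <= a -> / (a + 1) <= h <= / a ->
  Cmod (Cadd (Cmul (RC (a + 2 + / a)) (Csub (cos (v * h), sin (v * h)) (1, v * h)))
             (/ a, v * ((a + 2 + / a) * h - 1)))
  <= (a + 2 + / a) * (v * h) ^ 2 + (1 + 3 * v) * / a.
Proof.
  intros Ha Hv Hva Hh. pose proof (Rinv_0_lt_compat a ltac:(lra)) as Hia.
  assert (Hvh : 0 <= v * h <= 1).
  { split; [apply Rmult_le_pos; pose proof (Rinv_0_lt_compat (a + 1)); lra|].
    apply Rle_trans with (v * / a); [apply Rmult_le_compat_l; lra|].
    apply Rmult_le_reg_r with a; [lra|]. rewrite Rmult_assoc, Rinv_l by lra; lra. }
  pose proof (linear_coeff_bound a h Ha Hh) as Hlin.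
  eapply Rle_trans; [apply Cmod_add|].
  rewrite Cmod_mul, Cmod_RC, Rabs_pos_eq by lra.
  pose proof (expi_second_order (v * h) Hvh) as HE.
  pose proof (Cmod_le_l1 (/ a, v * ((a + 2 + / a) * h - 1))) as HR. simpl fst in HR; simpl snd in HR.
  rewrite Rabs_pos_eq, Rabs_pos_eq in HR by (try apply Rmult_le_pos; lra).
  assert (v * ((a + 2 + / a) * h - 1) <= v * (3 * / a)) by (apply Rmult_le_compat_l; lra).
  assert ((a + 2 + / a) * Cmod (Csub (cos (v * h), sin (v * h)) (1, v * h))
          <= (a + 2 + / a) * (v * h) ^ 2) by (apply Rmult_le_compat_l; lra).
  lra.
Qed.

Lemma euler_ratio_close v n : 0 < v -> 1 <= INR n -> v <= INR n ->
  Cmod (Csub (euler_ratio (1, v) n) (RC 1)) <= (2 * v ^ 2 + 3 * v + 1) / INR n ^ 2.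
Proof.
  intros Hv Ha Hva. unfold euler_ratio. set (a := INR n) in *.
  set (h := ln (a + 1) - ln a). destruct (ln_succ_gap a Ha) as [Hh1 Hh2]. fold h in Hh1, Hh2.
  assert (Hexp : exp h = (a + 1) / a)
    by (unfold h, Rminus; rewrite exp_plus, exp_Ropp, !exp_ln by lra; reflexivity).
  assert (HD : ((a + 2, v) : Cx) <> RC 0) by (apply Cnz_of_fst; simpl; lra).
  rewrite euler_ratio_decomp, Cmod_mul, Cmod_inv by auto.
  assert (HDmod : a + 2 <= Cmod (a + 2, v))
    by (pose proof (Cmod_fst (a + 2, v)) as T; simpl in T; rewrite Rabs_pos_eq in T; lra).
  pose proof (ratio_numerator_bound a v h Ha Hv Hva (conj Hh1 Hh2)) as Hnum.
  apply Rle_trans with (((a + 2 + / a) * (v * h) ^ 2 + (1 + 3 * v) * / a) / (a + 2)).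
  - unfold Rdiv. apply Rmult_le_compat; [apply Cmod_ge0 | left; apply Rinv_0_lt_compat;
      apply Cmod_pos; exact HD | exact Hnum | apply Rinv_le_contravar; lra].
  - replace ((2 * v ^ 2 + 3 * v + 1) / a ^ 2) with ((2 * v ^ 2 + 3 * v + 1) * (/ a) ^ 2)
      by (field; lra).
    apply ratio_bound_arith; [lra | lra | field; lra |].
    split; [apply Rmult_le_pos; pose proof (Rinv_0_lt_compat (a + 1)); lra|].
    apply Rmult_le_compat_l; lra.
Qed.

Lemma gamma_1_plus_iv v : 0 < v -> exists L, L <> RC 0 /\ Ccv (euler_seq (1, v)) L.
Proof.
  intro Hv. destruct (INR_unbounded v) as [N1 HN1]. set (N := (N1 + 2)%nat).
  assert (HN : 2 <= INR N /\ v <= INR N)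
    by (unfold N; rewrite plus_INR; simpl; pose proof (pos_INR N1); lra).
  destruct (convergent_product (fun k => euler_seq (1, v) (k + N))
              (fun k => euler_ratio (1, v) (k + N)) (2 * v ^ 2 + 3 * v + 1))
    as [L [HL0 HL]].
  - nra.
  - intro k. apply (euler_seq_succ (1, v) (k + N)). simpl; lra.
  - intro k. cbv beta. pose proof (pos_INR k).
    eapply Rle_trans; [apply euler_ratio_close; rewrite ?plus_INR; lra|].
    rewrite plus_INR. unfold Rdiv. apply Rmult_le_compat_l; [nra|].
    apply Rinv_le_contravar; nra.
  - intro k. apply euler_seq_nz. simpl; lra.
  - exists L. split; auto. apply (Ccv_shift _ _ N). exact HL.
Qed.

(** [gamma_up L v k] is [Gamma (k + 1 + i v)], computed from [L = Gamma (1 + i v)] by the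
    functional equation. *)
Definition gamma_arg (v : R) (k : nat) : Cx := (INR k + 1, v).

Fixpoint gamma_up (L : Cx) (v : R) (k : nat) : Cx :=
  match k with O => L | S k => Cmul (gamma_arg v k) (gamma_up L v k) end.

Lemma gamma_up_cv L v k :
  Ccv (euler_seq (1, v)) L -> Ccv (euler_seq (gamma_arg v k)) (gamma_up L v k).
Proof.
  intro H0. induction k as [|k IH].
  - replace (gamma_arg v 0) with ((1, v) : Cx) by (unfold gamma_arg; ceq; ring). exact H0.
  - simpl gamma_up.
    replace (gamma_arg v (S k)) with (Cadd (gamma_arg v k) (RC 1))
      by (unfold gamma_arg; rewrite S_INR; ceq; ring).
    assert (Hpos : 0 < fst (gamma_arg v k)) by (simpl; pose proof (pos_INR k); lra).
    replace (Cmul (gamma_arg v k) (gamma_up L v k))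
      with (Cmul (Cmul (gamma_arg v k) (gamma_up L v k)) (RC 1)) by (ceq; ring).
    apply (Ccv_eventually_ext (fun n => Cmul (Cmul (gamma_arg v k) (euler_seq (gamma_arg v k) n))
               (Cmul (RC (INR n)) (Cinv (Cadd (gamma_arg v k) (RC (INR n + 1)))))) _ _ 1%nat).
    + intros n Hn. symmetry. apply euler_seq_shift; auto.
    + apply Ccv_mul; [apply (Ccv_mul (fun _ => gamma_arg v k)); [apply Ccv_const | auto]|].
      apply shift_factor_cv. lra.
Qed.

Lemma gamma_up_lower L v k : Cmod L <= Cmod (gamma_up L v k).
Proof.
  induction k as [|k IH]; simpl gamma_up; [lra|].
  rewrite Cmod_mul.
  assert (1 <= Cmod (gamma_arg v k)).
  { pose proof (Cmod_fst (gamma_arg v k)) as H. simpl in H. pose proof (pos_INR k).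
    rewrite Rabs_pos_eq in H; lra. }
  pose proof (Cmod_ge0 (gamma_up L v k)). nra.
Qed.

(** * Series dominated by the exponential series *)

Section DominatedSeries.
Variables (d : nat -> Cx) (M X : R).
Hypothesis M_ge0 : 0 <= M.
Hypothesis X_ge0 : 0 <= X.
Hypothesis d_dominated : forall k, Cmod (d k) <= M * (/ INR (fact k) * X ^ k).

Let A := sum_f_R0 (fun i => / INR (fact i) * X ^ i).

Lemma exp_partial_sums_cv : Un_cv A (exp X).
Proof. unfold A, exp. destruct (exist_exp X) as [l Hl]. exact Hl. Qed.

Lemma exp_partial_sums_mono m k : A m <= A (k + m)%nat.
Proof.
  induction k as [|k IH]; [simpl; lra|].
  replace (S k + m)%nat with (S (k + m)) by lia. unfold A in *. cbn [sum_f_R0].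
  assert (0 <= / INR (fact (S (k + m))) * X ^ S (k + m)).
  { apply Rmult_le_pos; [left; apply Rinv_0_lt_compat, lt_0_INR, lt_O_fact | apply pow_le; auto]. }
  lra.
Qed.

Lemma Csum_increment m k : Cmod (Csub (Csum d (k + m)) (Csum d m)) <= M * (A (k + m)%nat - A m).
Proof.
  induction k as [|k IH].
  - simpl. replace (Csub (Csum d m) (Csum d m)) with (RC 0) by (unfold Csub; ceq; ring).
    rewrite Cmod_RC, Rabs_R0. lra.
  - replace (S k + m)%nat with (S (k + m)) by lia. cbn [Csum]. unfold A in *. cbn [sum_f_R0].
    replace (Csub (Cadd (Csum d (k + m)) (d (S (k + m)))) (Csum d m))
      with (Cadd (Csub (Csum d (k + m)) (Csum d m)) (d (S (k + m)))) by (unfold Csub; ceq; ring).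
    eapply Rle_trans; [apply Cmod_add|]. specialize (d_dominated (S (k + m))). lra.
Qed.

Lemma dominated_series_cv :
  exists g, Ccv (Csum d) g /\ Cmod (Csub g (d 0%nat)) <= M * (exp X - 1).
Proof.
  destruct (Ccauchy_cv (Csum d)) as [g Hg].
  { apply Ccauchy_ordered. intros eps Heps.
    destruct (CV_Cauchy A (exist _ _ exp_partial_sums_cv) (eps / (M + 1))) as [N HN].
    { apply Rlt_gt, Rdiv_lt_0_compat; lra. }
    exists N. intros n m Hm Hnm. replace n with ((n - m) + m)%nat by lia.
    eapply Rle_lt_trans; [apply Csum_increment|].
    specialize (HN (n - m + m)%nat m ltac:(lia) Hm). unfold R_dist in HN.
    pose proof (exp_partial_sums_mono m (n - m)).
    rewrite Rabs_pos_eq in HN by lra.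
    apply Rle_lt_trans with ((M + 1) * (A (n - m + m)%nat - A m)); [apply Rmult_le_compat_r; lra|].
    replace eps with ((M + 1) * (eps / (M + 1))) by (field; lra).
    apply Rmult_lt_compat_l; lra. }
  exists g. split; auto.
  apply (Ccv_dist_upper _ _ _ _ 0%nat Hg). intros n _.
  replace (d 0%nat) with (Csum d 0) by reflexivity. replace n with (n + 0)%nat at 1 by lia.
  eapply Rle_trans; [apply Csum_increment|].
  assert (A (n + 0)%nat <= exp X)
    by (apply growing_ineq; [intro j; apply (exp_partial_sums_mono j 1) | apply exp_partial_sums_cv]).
  assert (A 0%nat = 1) by (unfold A; simpl; field).
  apply Rmult_le_compat_l; lra.
Qed.
End DominatedSeries.

(** * The Bessel functions [J_{i v}] and [J_{-i v}] *)

Definition bessel_term (a : Cx) (s : R) (k : nat) : Cx :=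
  Cmul (RC ((-1) ^ k / INR (fact k)))
       (Cmul (Cinv (Cgamma (Cadd a (RC (INR k + 1))))) (Cpowr (s / 2) (Cadd a (RC (2 * INR k))))).

Lemma BesselJ_partial_sums a s : BesselJ a s = Clim (Csum (bessel_term a s)).
Proof. reflexivity. Qed.

Lemma Csum_ext d e n : (forall k, d k = e k) -> Csum d n = Csum e n.
Proof. intro H. induction n as [|n IH]; cbn [Csum]; rewrite ?IH, H; reflexivity. Qed.

Lemma Csum_conj d n : Csum (fun k => Cconj (d k)) n = Cconj (Csum d n).
Proof. induction n as [|n IH]; cbn [Csum]; auto. rewrite IH, Cconj_add; auto. Qed.

Lemma Csum_scale c d n : Csum (fun k => Cmul c (d k)) n = Cmul c (Csum d n).
Proof. induction n as [|n IH]; cbn [Csum]; auto. rewrite IH. ceq; ring. Qed.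

Lemma exp_mul_nat k y : exp (INR k * y) = exp y ^ k.
Proof.
  induction k as [|k IH]; [simpl; rewrite Rmult_0_l, exp_0; auto|].
  rewrite S_INR, Rmult_plus_distr_r, Rmult_1_l, exp_plus, IH. simpl. ring.
Qed.

(** Given [L = Gamma (1 + i v) <> 0], the series of [J_{i v} (s)] is [(s/2)^{i v}] times a
    series with [k]-th term [(-1)^k (s/2)^{2k} / (k! Gamma (k + 1 + i v))], dominated by
    [|1/L| (s/2)^{2k} / k!]; the series of [J_{-i v}] is its complex conjugate. *)
Section BesselSeries.
Variables (v : R) (L : Cx).
Hypothesis L_nz : L <> RC 0.
Hypothesis L_gamma : Ccv (euler_seq (1, v)) L.

Lemma Cgamma_plus k : Cgamma (Cadd (0, v) (RC (INR k + 1))) = gamma_up L v k.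
Proof.
  rewrite Cgamma_euler_seq. apply Clim_eq.
  replace (Cadd (0, v) (RC (INR k + 1))) with (gamma_arg v k) by (unfold gamma_arg; ceq; ring).
  apply gamma_up_cv; auto.
Qed.

Lemma Cgamma_minus k : Cgamma (Cadd (0, - v) (RC (INR k + 1))) = Cconj (gamma_up L v k).
Proof.
  rewrite Cgamma_euler_seq. apply Clim_eq.
  replace (Cadd (0, - v) (RC (INR k + 1))) with (Cconj (gamma_arg v k))
    by (unfold gamma_arg; ceq; ring).
  apply (Ccv_eventually_ext (fun n => Cconj (euler_seq (gamma_arg v k) n))) with 0%nat.
  - intros; symmetry; apply euler_seq_conj.
  - apply Ccv_conj, gamma_up_cv; auto.
Qed.

Lemma gamma_up_nz k : gamma_up L v k <> RC 0.
Proof.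
  intro E. pose proof (gamma_up_lower L v k) as H. rewrite E, Cmod_RC, Rabs_R0 in H.
  pose proof (Cmod_pos _ L_nz). lra.
Qed.

Definition bessel_reduced_term (s : R) (k : nat) : Cx :=
  Cmul (RC ((-1) ^ k / INR (fact k) * exp (2 * ln (s / 2)) ^ k)) (Cinv (gamma_up L v k)).

Lemma bessel_term_factor s k :
  bessel_term (0, v) s k = Cmul (Cexp (0, v * ln (s / 2))) (bessel_reduced_term s k).
Proof.
  unfold bessel_term, bessel_reduced_term. rewrite Cgamma_plus. unfold Cpowr.
  replace (Cmul (Cadd (0, v) (RC (2 * INR k))) (RC (ln (s / 2))))
    with (Cadd (INR k * (2 * ln (s / 2)), 0) (0, v * ln (s / 2))) by (ceq; ring).
  rewrite Cexp_add, Cexp_real, exp_mul_nat. ceq; ring.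
Qed.

Lemma bessel_term_conj s k : bessel_term (0, - v) s k = Cconj (bessel_term (0, v) s k).
Proof.
  unfold bessel_term. rewrite Cgamma_plus, Cgamma_minus, !Cconj_mul, Cconj_RC, Cconj_inv,
    <- Cpowr_conj.
  do 3 f_equal. ceq; ring.
Qed.

Lemma bessel_reduced_cv s : exists g,
  Ccv (Csum (bessel_reduced_term s)) g /\
  Cmod (Csub g (Cinv L)) <= / Cmod L * (exp (exp (2 * ln (s / 2))) - 1).
Proof.
  set (X := exp (2 * ln (s / 2))).
  assert (HX : 0 <= X) by (left; apply exp_pos).
  assert (Hfact : forall k, 0 < / INR (fact k)) by (intro; apply Rinv_0_lt_compat, lt_0_INR, lt_O_fact).
  destruct (dominated_series_cv (bessel_reduced_term s) (/ Cmod L) X) as [g [Hg Hgb]].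
  - left. apply Rinv_0_lt_compat, Cmod_pos; auto.
  - exact HX.
  - intro k. unfold bessel_reduced_term. fold X.
    rewrite Cmod_mul, Cmod_RC, Cmod_inv by apply gamma_up_nz.
    replace (Rabs ((-1) ^ k / INR (fact k) * X ^ k)) with (/ INR (fact k) * X ^ k).
    + rewrite Rmult_comm. apply Rmult_le_compat_r.
      * apply Rmult_le_pos; [left; apply Hfact | apply pow_le; auto].
      * apply Rinv_le_contravar; [apply Cmod_pos; auto | apply gamma_up_lower].
    + unfold Rdiv. rewrite !Rabs_mult, pow_1_abs, Rabs_pos_eq, (Rabs_pos_eq (X ^ k));
        [ring | apply pow_le; auto | left; apply Hfact].
  - exists g. split; auto.
    replace (Cinv L) with (bessel_reduced_term s 0%nat); auto.
    unfold bessel_reduced_term. rewrite !pow_O. replace (1 / INR (fact 0) * 1) with 1 by (simpl; field). ceq; ring.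
Qed.
Lemma bessel_series_cv s g : Ccv (Csum (bessel_reduced_term s)) g ->
  Ccv (Csum (bessel_term (0, v) s)) (Cmul (Cexp (0, v * ln (s / 2))) g).
Proof.
  intro Hg.
  apply (Ccv_eventually_ext (fun n => Cmul (Cexp (0, v * ln (s / 2))) (Csum (bessel_reduced_term s) n)))
    with 0%nat.
  - intros n _. rewrite <- Csum_scale. apply Csum_ext. intro k. symmetry. apply bessel_term_factor.
  - apply (Ccv_mul (fun _ => _)); [apply Ccv_const | exact Hg].
Qed.
End BesselSeries.

Lemma BesselJ_conj v s : 0 < v -> BesselJ (0, - v) s = Cconj (BesselJ (0, v) s).
Proof.
  intro Hv. destruct (gamma_1_plus_iv v Hv) as [L [HL0 HL]].
  destruct (bessel_reduced_cv v L HL0 s) as [g [Hg _]].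
  pose proof (bessel_series_cv v L HL s g Hg) as Hplus.
  rewrite (BesselJ_partial_sums (0, v)), (Clim_eq _ _ Hplus), BesselJ_partial_sums.
  apply Clim_eq.
  apply (Ccv_eventually_ext (fun n => Cconj (Csum (bessel_term (0, v) s) n))) with 0%nat.
  - intros n _. rewrite <- Csum_conj. apply Csum_ext. intro k. symmetry.
    apply (bessel_term_conj v L HL).
  - apply Ccv_conj, Hplus.
Qed.

Lemma exp_minus_one_small X : 0 <= X <= 1 / 2 -> exp X - 1 <= 2 * X.
Proof.
  intro H. pose proof (exp_ineq1_le (- X)) as H1. rewrite exp_Ropp in H1.
  pose proof (exp_pos X).
  assert (exp X * (1 - X) <= 1).
  { apply Rmult_le_reg_l with (/ exp X); [apply Rinv_0_lt_compat; lra|].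
    rewrite <- Rmult_assoc, Rinv_l, Rmult_1_l, Rmult_1_r by lra. lra. }
  nra.
Qed.

Lemma BesselJ_near_zero v : 0 < v -> exists b0 : Cx, b0 <> RC 0 /\
  forall eps, 0 < eps -> exists delta, 0 < delta /\ forall s, 0 < s < delta ->
    exists g, BesselJ (0, v) s = Cmul (Cexp (0, v * ln (s / 2))) g /\ Cmod (Csub g b0) < eps.
Proof.
  intro Hv. destruct (gamma_1_plus_iv v Hv) as [L [HL0 HL]].
  exists (Cinv L). split; [apply Cinv_nz; auto|].
  intros eps Heps. set (M := / Cmod L).
  assert (HM : 0 <= M) by (left; apply Rinv_0_lt_compat, Cmod_pos; auto).
  exists (Rmin 1 (eps / (M + 1))). split.
  { apply Rmin_pos; [lra | apply Rdiv_lt_0_compat; lra]. }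
  intros s [Hs0 Hs].
  pose proof (Rmin_l 1 (eps / (M + 1))). pose proof (Rmin_r 1 (eps / (M + 1))).
  destruct (bessel_reduced_cv v L HL0 s) as [g [Hg Hgb]].
  exists g. split; [apply Clim_eq, (bessel_series_cv v L HL s g Hg)|].
  assert (HX : exp (2 * ln (s / 2)) = (s / 2) ^ 2)
    by (replace (2 * ln (s / 2)) with (ln (s / 2) + ln (s / 2)) by ring;
        rewrite exp_plus, exp_ln by lra; ring).
  rewrite HX in Hgb. fold M in Hgb.
  pose proof (exp_minus_one_small ((s / 2) ^ 2) ltac:(split; nra)).
  assert (M * (exp ((s / 2) ^ 2) - 1) <= M * s) by (apply Rmult_le_compat_l; nra).
  assert (M * s <= M * (eps / (M + 1))) by (apply Rmult_le_compat_l; lra).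
  assert (M * (eps / (M + 1)) < eps).
  { replace eps with ((M + 1) * (eps / (M + 1))) at 2 by (field; lra).
    apply Rmult_lt_compat_r; [apply Rdiv_lt_0_compat|]; lra. }
  lra.
Qed.

Lemma phase_attained v th delta : 0 < v -> 0 < delta ->
  exists s, 0 < s < delta /\ Cexp (0, v * ln (s / 2)) = (cos th, sin th).
Proof.
  intros Hv Hd. pose proof PI_RGT_0.
  destruct (INR_unbounded ((th - v * ln (delta / 2)) / (2 * PI))) as [n Hn].
  set (y := (th - 2 * INR n * PI) / v).
  exists (2 * exp y). pose proof (exp_pos y).
  replace (2 * exp y / 2) with (exp y) by field. rewrite ln_exp.
  split; [split; [lra|]|].
  - assert (y < ln (delta / 2)).
    { apply Rmult_lt_reg_l with v; auto. unfold y.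
      replace (v * ((th - 2 * INR n * PI) / v)) with (th - 2 * INR n * PI) by (field; lra).
      apply Rmult_lt_compat_l with (r := 2 * PI) in Hn; [|lra].
      replace (2 * PI * ((th - v * ln (delta / 2)) / (2 * PI))) with (th - v * ln (delta / 2))
        in Hn by (field; lra).
      lra. }
    apply exp_increasing in H1. rewrite exp_ln in H1 by lra. lra.
  - rewrite Cexp_imag. replace (v * y) with (th + 2 * INR n * PI * -1 + 0) by (unfold y; field; lra).
    rewrite Rplus_0_r.
    replace (th + 2 * INR n * PI * -1) with (th - 2 * INR n * PI) by ring.
    rewrite <- (cos_period (th - 2 * INR n * PI) n), <- (sin_period (th - 2 * INR n * PI) n).
    f_equal; f_equal; ring.
Qed.

Lemma Cmod_arbitrarily_small w : (forall eps, 0 < eps -> Cmod w < eps) -> w = RC 0.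
Proof.
  intro H. apply Cmod_eq0. pose proof (Cmod_ge0 w).
  destruct H0 as [H0|H0]; auto. specialize (H (Cmod w) H0). lra.
Qed.

(** * Linear independence of [J_{i v}] and [J_{-i v}] *)

(** If [a J_{i v} + b J_{-i v}] vanishes on [(0, oo)], then for every phase [e] on the unit
    circle [a e b0 + b conj (e b0) = 0], where [b0 = 1 / Gamma (1 + i v)]: take [s -> 0]
    along points where [(s/2)^{i v} = e]. *)
Lemma vanishing_combination_phase v a b b0 th : 0 < v ->
  (forall eps, 0 < eps -> exists delta, 0 < delta /\ forall s, 0 < s < delta ->
     exists g, BesselJ (0, v) s = Cmul (Cexp (0, v * ln (s / 2))) g /\ Cmod (Csub g b0) < eps) ->
  (forall s, 0 < s -> Cadd (Cmul a (BesselJ (0, v) s)) (Cmul b (BesselJ (0, - v) s)) = RC 0) ->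
  Cadd (Cmul a (Cmul (cos th, sin th) b0)) (Cmul b (Cconj (Cmul (cos th, sin th) b0))) = RC 0.
Proof.
  intros Hv Hnear Hab. set (e := (cos th, sin th) : Cx).
  assert (He : Cmod e = 1)
    by (unfold e; rewrite <- Cexp_imag, Cmod_Cexp; apply exp_0).
  set (K := Cmod a + Cmod b + 1).
  assert (HK : 0 < K) by (unfold K; pose proof (Cmod_ge0 a); pose proof (Cmod_ge0 b); lra).
  apply Cmod_arbitrarily_small. intros eps Heps.
  destruct (Hnear (eps / K)) as [delta [Hd Hdelta]]; [apply Rdiv_lt_0_compat; lra|].
  destruct (phase_attained v th delta Hv Hd) as [s [Hs Hph]].
  destruct (Hdelta s Hs) as [g [HJ Hg]].
  specialize (Hab s ltac:(lra)). rewrite BesselJ_conj, HJ, Hph in Hab by auto. fold e in Hab.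
  replace (Cadd (Cmul a (Cmul e b0)) (Cmul b (Cconj (Cmul e b0))))
    with (Cadd (Cmul a (Cmul e (Csub b0 g))) (Cmul b (Cconj (Cmul e (Csub b0 g)))))
    by (transitivity (Csub (Cadd (Cmul a (Cmul e b0)) (Cmul b (Cconj (Cmul e b0))))
                           (Cadd (Cmul a (Cmul e g)) (Cmul b (Cconj (Cmul e g)))));
        [unfold Csub; ceq; ring | rewrite Hab; unfold Csub; ceq; ring]).
  eapply Rle_lt_trans; [apply Cmod_add|].
  rewrite !Cmod_mul, Cmod_conj, Cmod_mul, He, (Cmod_sub_sym b0).
  pose proof (Cmod_ge0 a). pose proof (Cmod_ge0 b).
  apply Rle_lt_trans with (K * Cmod (Csub g b0)); [unfold K; pose proof (Cmod_ge0 (Csub g b0)); nra|].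
  replace eps with (K * (eps / K)) by (field; lra).
  apply Rmult_lt_compat_l; auto.
Qed.

Lemma bessel_imag_independent v a b : 0 < v ->
  (forall s, 0 < s -> Cadd (Cmul a (BesselJ (0, v) s)) (Cmul b (BesselJ (0, - v) s)) = RC 0) ->
  a = RC 0 /\ b = RC 0.
Proof.
  intros Hv Hab. destruct (BesselJ_near_zero v Hv) as [b0 [Hb0 Hnear]].
  pose proof (vanishing_combination_phase v a b b0 0 Hv Hnear Hab) as E0.
  pose proof (vanishing_combination_phase v a b b0 (PI / 2) Hv Hnear Hab) as E1.
  rewrite cos_0, sin_0 in E0. rewrite cos_PI2, sin_PI2 in E1.
  (* the two relations read [a b0 + b conj b0 = 0] and [i (a b0 - b conj b0) = 0] *)
  assert (Hsum : Cadd (Cmul a b0) (Cmul b (Cconj b0)) = RC 0) by (rewrite <- E0; ceq; ring).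
  assert (Hdiff : Csub (Cmul a b0) (Cmul b (Cconj b0)) = RC 0).
  { transitivity (Cmul (0, -1) (Cadd (Cmul a (Cmul (0, 1) b0)) (Cmul b (Cconj (Cmul (0, 1) b0)))));
      [unfold Csub; ceq; ring | rewrite E1; ceq; ring]. }
  assert (Ha : Cmul a b0 = RC 0).
  { transitivity (Cmul (RC (/ 2)) (Cadd (Cadd (Cmul a b0) (Cmul b (Cconj b0)))
                                        (Csub (Cmul a b0) (Cmul b (Cconj b0)))));
      [unfold Csub; ceq; field | rewrite Hsum, Hdiff; ceq; ring]. }
  assert (Hb : Cmul b (Cconj b0) = RC 0).
  { transitivity (Cmul (RC (/ 2)) (Csub (Cadd (Cmul a b0) (Cmul b (Cconj b0)))
                                        (Csub (Cmul a b0) (Cmul b (Cconj b0)))));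
      [unfold Csub; ceq; field | rewrite Hsum, Hdiff; ceq; ring]. }
  assert (Hb0c : Cconj b0 <> RC 0)
    by (intro E; apply Hb0; rewrite <- (Cconj_involutive b0), E; ceq; ring).
  split; eapply Cmul_eq0_l; eauto.
Qed.

(** * The eigen-equation [PCT f = eta f] as two scalar equations *)

Lemma Cexp_Ci r : Cexp (Cmul Ci (RC r)) = (cos r, sin r).
Proof. replace (Cmul Ci (RC r)) with ((0, r) : Cx) by (unfold Ci; ceq; ring). apply Cexp_imag. Qed.

Lemma norm3_neg p : norm3 (neg3 p) = norm3 p.
Proof. unfold norm3, dot3, neg3; cbn [fst snd]. f_equal. ring. Qed.

Lemma dot3_neg_r x p : dot3 x (neg3 p) = - dot3 x p.
Proof. unfold dot3, neg3; cbn [fst snd]. ring. Qed.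

Lemma dot3_neg_l x p : dot3 (neg3 x) p = - dot3 x p.
Proof. unfold dot3, neg3; cbn [fst snd]. ring. Qed.

Lemma T_factor_order w : Cexp (Cmul (RC PI) (Cmul Ci (0, w))) = RC (exp (- (PI * w))).
Proof.
  replace (Cmul (RC PI) (Cmul Ci (0, w))) with ((- (PI * w), 0) : Cx) by (unfold Ci; ceq; ring).
  apply Cexp_real.
Qed.

Lemma T_factor_time : Cexp (0, 3 / 2 * PI) = (0, -1).
Proof.
  rewrite Cexp_imag. replace (3 / 2 * PI) with (3 * (PI / 2)) by field.
  rewrite cos_3PI2, sin_3PI2. reflexivity.
Qed.

Section ExplicitForms.
Variables (omega v : R) (c : Cx * Cx) (p : R3) (t : R) (x : R3).
Hypothesis v_pos : 0 < v.
Let K := Knorm omega v * Rpower (- omega * t) (3 / 2).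
Let e := (cos (dot3 x p), sin (dot3 x p)) : Cx.
Let J := BesselJ (0, v) (- norm3 p * t).

Lemma fc_explicit :
  fc omega v c p t x = Cmul (RC K) (Cmul e (Cadd (Cmul (fst c) J) (Cmul (snd c) (Cconj J)))).
Proof.
  unfold fc, ustar_neg, u, mode. rewrite norm3_neg, dot3_neg_r, !Cexp_Ci.
  fold J. unfold K, e. rewrite cos_neg, sin_neg. ceq; ring.
Qed.

Lemma PCT_fc_explicit :
  PCT_fc omega v c p t x
  = Cmul (RC K) (Cmul e (Cmul Ci (Cadd (Cmul (RC (exp (- (PI * v)))) (Cmul (Cconj (fst c)) (Cconj J)))
                                       (Cmul (RC (exp (PI * v))) (Cmul (Cconj (snd c)) J))))).
Proof.
  unfold PCT_fc, Pop, Cop, T_fc, modeT, mode.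
  rewrite dot3_neg_l, !Cexp_Ci, T_factor_time, !T_factor_order, BesselJ_conj by auto.
  fold J. unfold K, e, Ci. rewrite cos_neg, sin_neg.
  replace (- (PI * - v)) with (PI * v) by ring. ceq; ring.
Qed.
End ExplicitForms.

Definition alpha (v : R) (c : Cx * Cx) (eta : Cx) : Cx :=
  Csub (Cmul Ci (Cmul (RC (exp (PI * v))) (Cconj (snd c)))) (Cmul eta (fst c)).
Definition beta (v : R) (c : Cx * Cx) (eta : Cx) : Cx :=
  Csub (Cmul Ci (Cmul (RC (exp (- (PI * v)))) (Cconj (fst c)))) (Cmul eta (snd c)).

Lemma PCT_minus_eta omega v c eta p t x : 0 < v ->
  PCT_fc omega v c p t x
  = Cadd (Cmul eta (fc omega v c p t x))
         (Cmul (RC (Knorm omega v * Rpower (- omega * t) (3 / 2)))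
               (Cmul (cos (dot3 x p), sin (dot3 x p))
                     (Cadd (Cmul (alpha v c eta) (BesselJ (0, v) (- norm3 p * t)))
                           (Cmul (beta v c eta) (BesselJ (0, - v) (- norm3 p * t)))))).
Proof.
  intro Hv. rewrite PCT_fc_explicit, fc_explicit, BesselJ_conj by auto.
  unfold alpha, beta, Csub. ring.
Qed.

Lemma Knorm_factor_pos omega v t : 0 < omega -> 0 < v -> t < 0 ->
  0 < Knorm omega v * Rpower (- omega * t) (3 / 2).
Proof.
  intros Ho Hv Ht. unfold Knorm, Rpower. pose proof PI_RGT_0.
  assert (0 < sinh (PI * v)) by (rewrite <- sinh_0; apply sinh_lt; nra).
  assert (0 < sqrt (PI / omega)) by (apply sqrt_lt_R0, Rdiv_lt_0_compat; lra).
  assert (0 < sqrt (2 * sinh (PI * v))) by (apply sqrt_lt_R0; lra).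
  pose proof (exp_pos (- (3 / 2) * ln (2 * PI))). pose proof (exp_pos (3 / 2 * ln (- omega * t))).
  repeat apply Rmult_lt_0_compat; auto. apply Rinv_0_lt_compat; auto.
Qed.

(** [PCT f = eta f] for all [p, t < 0, x] iff [alpha = beta = 0], by the linear independence
    of [J_{i v}] and [J_{-i v}]. *)
Lemma PCT_eigen_iff omega v c eta : 0 < omega -> 0 < v ->
  ((forall (p : R3) (t : R) (x : R3), t < 0 ->
      PCT_fc omega v c p t x = Cmul eta (fc omega v c p t x))
   <-> (alpha v c eta = RC 0 /\ beta v c eta = RC 0)).
Proof.
  intros Ho Hv. split.
  - intro Heig. apply (bessel_imag_independent v); auto. intros s Hs.
    set (p0 := ((1, 0), 0) : R3).
    assert (Hn : norm3 p0 = 1)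
      by (unfold norm3, dot3, p0; cbn [fst snd]; replace (1 * 1 + 0 * 0 + 0 * 0) with 1 by ring; apply sqrt_1).
    specialize (Heig p0 (- s) p0 ltac:(lra)).
    rewrite (PCT_minus_eta omega v c eta) in Heig by auto.
    replace (- norm3 p0 * - s) with s in Heig by (rewrite Hn; ring).
    set (Z := Cadd (Cmul (alpha v c eta) (BesselJ (0, v) s)) (Cmul (beta v c eta) (BesselJ (0, - v) s))) in *.
    set (K := Knorm omega v * Rpower (- omega * - s) (3 / 2)) in *.
    set (e := (cos (dot3 p0 p0), sin (dot3 p0 p0)) : Cx) in *.
    assert (HK : RC K <> RC 0)
      by (apply Cnz_of_fst; simpl; unfold K; pose proof (Knorm_factor_pos omega v (- s) Ho Hv ltac:(lra)); lra).
    assert (He : e <> RC 0) by (unfold e; rewrite <- Cexp_imag; apply Cexp_nz).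
    assert (HZ : Cmul (RC K) (Cmul e Z) = RC 0).
    { transitivity (Csub (Cadd (Cmul eta (fc omega v c p0 (- s) p0)) (Cmul (RC K) (Cmul e Z)))
                         (Cmul eta (fc omega v c p0 (- s) p0))); [unfold Csub; ring|].
      rewrite Heig. unfold Csub; ring. }
    replace Z with (Cmul (Cinv e) (Cmul (Cinv (RC K)) (Cmul (RC K) (Cmul e Z)))) by (field; auto).
    rewrite HZ. ring.
  - intros [Ha Hb] p t x Ht.
    rewrite (PCT_minus_eta omega v c eta), Ha, Hb by auto. ring.
Qed.

(** * Solving [alpha = beta = 0] *)

Lemma Csub_eq0 z w : Csub z w = RC 0 -> w = z.
Proof. intro H. transitivity (Csub z (Csub z w)); [unfold Csub; ceq; ring | rewrite H; ceq; ring]. Qed.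

Lemma Cconj_mul_self z : Cmul (Cconj z) z = RC (Cnorm2 z).
Proof. unfold Cnorm2; ceq; ring. Qed.

Lemma Cexp_split r th : Cexp (r, th) = Cmul (RC (exp r)) (Cexp (0, th)).
Proof. rewrite <- Cexp_real, <- Cexp_add. f_equal; ceq; ring. Qed.

Lemma unit_phase_conj th : Cmul (Cconj (Cexp (0, th))) (Cexp (0, th)) = RC 1.
Proof. rewrite Cconj_mul_self. unfold Cnorm2, Cexp; simpl. rewrite exp_0. f_equal.
  pose proof (sin2_cos2 th) as H. unfold Rsqr in H. nra. Qed.

Lemma Cexp_imag_conj th : Cconj (Cexp (0, th)) = Cexp (0, - th).
Proof. rewrite Cexp_conj. reflexivity. Qed.

Definition eta0 (th1 th2 : R) : Cx := Cexp (0, - (th1 + th2 + 3 / 2 * PI)).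

Lemma eta0_factor th1 th2 :
  eta0 th1 th2 = Cmul (Cmul (Cconj (Cexp (0, th1))) (Cconj (Cexp (0, th2)))) Ci.
Proof.
  unfold eta0. rewrite !Cexp_imag_conj.
  replace ((0, - (th1 + th2 + 3 / 2 * PI)) : Cx)
    with (Cadd (Cadd (0, - th1) (0, - th2)) (Cconj (0, 3 / 2 * PI))) by (ceq; ring).
  rewrite !Cexp_add, <- Cexp_conj, T_factor_time. unfold Ci. ceq; ring.
Qed.

Lemma eigenvalue_unique v c eta eta' : fst c <> RC 0 ->
  alpha v c eta = RC 0 -> alpha v c eta' = RC 0 -> eta = eta'.
Proof.
  intros Hc1 Ha Ha'. apply Csub_eq0 in Ha. apply Csub_eq0 in Ha'.
  replace eta with (Cmul (Cmul eta (fst c)) (Cinv (fst c))) by (field; auto).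
  rewrite Ha, <- Ha'. field. auto.
Qed.

Section CoefficientEquations.
Variable v : R.
Hypothesis v_pos : 0 < v.

Let k := / sqrt (2 * sinh (PI * v)).
Let q := exp (PI * v).
Let r := exp (- (PI * v)).

Lemma q_r_inverse : q * r = 1.
Proof. unfold q, r. rewrite <- exp_plus, Rplus_opp_r. apply exp_0. Qed.

Lemma q_gt_1 : 1 < q.
Proof. unfold q. rewrite <- exp_0. apply exp_increasing. pose proof PI_RGT_0. nra. Qed.

Lemma k_pos : 0 < k.
Proof.
  unfold k. apply Rinv_0_lt_compat, sqrt_lt_R0. pose proof PI_RGT_0.
  assert (0 < sinh (PI * v)) by (rewrite <- sinh_0; apply sinh_lt; nra). lra.
Qed.

Lemma k_squared : k ^ 2 = / (q - r).
Proof.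
  pose proof q_r_inverse. pose proof q_gt_1. unfold k.
  rewrite pow_inv, <- Rsqr_pow2, Rsqr_sqrt; [unfold sinh; fold q r; field; nra|].
  unfold sinh; fold q r. nra.
Qed.

Lemma half_exp_squared y : exp (y / 2) ^ 2 = exp y.
Proof. simpl. rewrite Rmult_1_r, <- exp_plus. f_equal. field. Qed.

(** From [alpha = beta = 0]: [eta c1 c2 = i q |c2|^2 = i r |c1|^2], which together with
    [|c1|^2 - |c2|^2 = 1] fixes both moduli. *)
Lemma eigen_moduli (c : Cx * Cx) eta :
  Cnorm2 (fst c) - Cnorm2 (snd c) = 1 ->
  alpha v c eta = RC 0 -> beta v c eta = RC 0 ->
  Cnorm2 (fst c) = (k * exp (PI * v / 2)) ^ 2 /\ Cnorm2 (snd c) = (k * exp (- (PI * v / 2))) ^ 2.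
Proof.
  intros HN Ha Hb. apply Csub_eq0 in Ha. apply Csub_eq0 in Hb. fold q in Ha. fold r in Hb.
  assert (E : Cmul Ci (RC (q * Cnorm2 (snd c))) = Cmul Ci (RC (r * Cnorm2 (fst c)))).
  { rewrite <- !Cmul_RC, <- !Cconj_mul_self.
    transitivity (Cmul (Cmul eta (fst c)) (snd c)); [rewrite Ha; ring|].
    transitivity (Cmul (Cmul eta (snd c)) (fst c)); [ring | rewrite Hb; ring]. }
  apply (f_equal snd) in E. simpl in E.
  pose proof q_r_inverse. pose proof q_gt_1.
  rewrite !Rpow_mult_distr, k_squared, !half_exp_squared. fold q r.
  replace (- (PI * v / 2)) with (- (PI * v) / 2) by field. rewrite half_exp_squared. fold r.
  set (N1 := Cnorm2 (fst c)) in *. set (N2 := Cnorm2 (snd c)) in *.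
  assert (HN1 : N1 * (q - r) = q) by nra.
  assert (HN2 : N2 * (q - r) = r) by nra.
  assert (Hqr : q - r <> 0) by nra.
  split; (apply Rmult_eq_reg_r with (q - r); [|exact Hqr]); [rewrite HN1 | rewrite HN2]; field; exact Hqr.
Qed.
Lemma modulus_to_exp z a : Cnorm2 z = (k * exp a) ^ 2 -> exists th, z = Cmul (RC k) (Cexp (a, th)).
Proof.
  intro H. destruct (polar_form z) as [th Hth]. exists th. rewrite Hth. unfold Cmod. rewrite H.
  pose proof k_pos. pose proof (exp_pos a). rewrite sqrt_pow2 by nra. unfold Cexp; ceq; ring.
Qed.

Lemma eigen_normal_form c eta :
  Cnorm2 (fst c) - Cnorm2 (snd c) = 1 -> alpha v c eta = RC 0 -> beta v c eta = RC 0 ->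
  exists th1 th2, fst c = Cmul (RC k) (Cexp (PI * v / 2, th1)) /\
                  snd c = Cmul (RC k) (Cexp (- (PI * v / 2), th2)).
Proof.
  intros HN Ha Hb. destruct (eigen_moduli c eta HN Ha Hb) as [H1 H2].
  destruct (modulus_to_exp _ _ H1) as [th1 E1], (modulus_to_exp _ _ H2) as [th2 E2].
  exists th1, th2. auto.
Qed.

Lemma normal_form_eigen c th1 th2 :
  fst c = Cmul (RC k) (Cexp (PI * v / 2, th1)) ->
  snd c = Cmul (RC k) (Cexp (- (PI * v / 2), th2)) ->
  alpha v c (eta0 th1 th2) = RC 0 /\ beta v c (eta0 th1 th2) = RC 0.
Proof.
  intros H1 H2. unfold alpha, beta. rewrite H1, H2, (Cexp_split (PI * v / 2)), (Cexp_split (- (PI * v / 2))), eta0_factor.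
  fold q r.
  rewrite !Cconj_mul, !Cconj_RC.
  set (P1 := Cexp (0, th1)). set (P2 := Cexp (0, th2)).
  assert (E1 : Cmul (Cconj P1) P1 = RC 1) by apply unit_phase_conj.
  assert (E2 : Cmul (Cconj P2) P2 = RC 1) by apply unit_phase_conj.
  assert (Eq : q * exp (- (PI * v / 2)) = exp (PI * v / 2))
    by (unfold q; rewrite <- exp_plus; f_equal; field).
  assert (Er : r * exp (PI * v / 2) = exp (- (PI * v / 2)))
    by (unfold r; rewrite <- exp_plus; f_equal; field).
  split.
  - transitivity (Cmul (Cmul Ci (Cmul (RC k) (Cconj P2)))
                       (Csub (RC (q * exp (- (PI * v / 2))))
                             (Cmul (RC (exp (PI * v / 2))) (Cmul (Cconj P1) P1))));
      [rewrite <- Cmul_RC; unfold Csub; ring|].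
    rewrite E1, Eq. unfold Csub; ceq; ring.
  - transitivity (Cmul (Cmul Ci (Cmul (RC k) (Cconj P1)))
                       (Csub (RC (r * exp (PI * v / 2)))
                             (Cmul (RC (exp (- (PI * v / 2)))) (Cmul (Cconj P2) P2))));
      [rewrite <- Cmul_RC; unfold Csub; ring|].
    rewrite E2, Er. unfold Csub; ceq; ring.
Qed.
End CoefficientEquations.

Lemma cdot_self_norm c : cdot c c = RC 1 -> Cnorm2 (fst c) - Cnorm2 (snd c) = 1.
Proof. intro H. apply (f_equal fst) in H. unfold cdot, Cnorm2 in *. simpl in *. lra. Qed.

Theorem corollary4 (omega m lambda : R) (c : Cx * Cx) :
  0 < omega -> 0 < lambda -> lambda < mu m omega ->
  cdot c c = RC 1 ->
  let v := nu m omega lambda in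
  ((exists eta : Cx, forall (p : R3) (t : R) (x : R3), t < 0 ->
        PCT_fc omega v c p t x = Cmul eta (fc omega v c p t x))
   <->
   (exists theta1 theta2 : R,
        fst c = Cmul (RC (/ sqrt (2 * sinh (PI * v)))) (Cexp (PI * v / 2, theta1)) /\
        snd c = Cmul (RC (/ sqrt (2 * sinh (PI * v)))) (Cexp (- (PI * v / 2), theta2))))
  /\
  (forall theta1 theta2 : R,
        fst c = Cmul (RC (/ sqrt (2 * sinh (PI * v)))) (Cexp (PI * v / 2, theta1)) ->
        snd c = Cmul (RC (/ sqrt (2 * sinh (PI * v)))) (Cexp (- (PI * v / 2), theta2)) ->
        forall eta : Cx,
          (forall (p : R3) (t : R) (x : R3), t < 0 ->
              PCT_fc omega v c p t x = Cmul eta (fc omega v c p t x))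
          <-> eta = Cexp (0, - (theta1 + theta2 + 3 / 2 * PI))).
Proof.
  intros Ho Hl Hm Hcc v.
  assert (Hv : 0 < v) by (unfold v, nu; apply sqrt_lt_R0; nra).
  pose proof (cdot_self_norm c Hcc) as HN.
  split; [split|].
  - intros [eta Heig]. apply PCT_eigen_iff in Heig as [Ha Hb]; auto.
    eapply eigen_normal_form; eauto.
  - intros [th1 [th2 [H1 H2]]]. exists (eta0 th1 th2).
    apply PCT_eigen_iff; auto. apply normal_form_eigen; auto.
  - intros th1 th2 H1 H2 eta. rewrite PCT_eigen_iff by auto.
    destruct (normal_form_eigen v c th1 th2 H1 H2) as [Ha0 Hb0].
    split.
    + intros [Ha _]. apply (eigenvalue_unique v c); auto.
      rewrite H1. apply Cmul_nz; [apply Cnz_of_fst; simpl; pose proof (k_pos v Hv); lra | apply Cexp_nz].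
    + intros ->. auto.
Qed.
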